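(* Let $U$ be a totally ordered universe of integers and let $A\subseteq U$ be a set of $n$ integers stored in sorted order $A[1]<A[2]<\dots<A[n]$. Fix an integer $k=O(n)$ and let $D_k$ be the Binning Learned version of a dictionary ${\cal SD}$ built on $A$ with $k$ bins (as described in the context). Let $\Delta=G_{\max}/G_{\min}$ be the gap ratio of $A$. Assume that ${\cal SD}$ can be built in $O(c\,g(c))$ time on $c$ elements, where $g$ is convex and non-decreasing, and that searching in ${\cal SD}$ can be done in $O(f(c))$ time when it contains $c$ elements. Then $D_k$ can be built in $O(n\,g(n))$ time, and, given any element $x\in U$, the time to search for $x$ in $D_k$ is $O\!\left(f\!\left(\min\left(n,\frac{n\Delta}{k}\right)\right)\right)$.
   Context: A (static sorted set) dictionary ${\cal SD}$ over a sorted set $A\subseteq U$ supports $search(x)$, returning TRUE iff $x\in A$. Binning construction $D_k$: the range $[A[1],A[n]]$ of the universe is divided into $k$ consecutive bins $B_1,\dots,B_k$, each representing a range of integers of size $\frac{A[n]-A[1]}{k}$; each bin is associated with the (sorted) elements of $A$ falling into its range. For each bin a separate copy of ${\cal SD}$ is built containing exactly the elements of $A$ in that bin, and an auxiliary array of length $k$ stores in its $j$-th entry a pointer to the structure of bin $j$ (possibly empty). To query $x\in U$, one computes the bin index $i=\left\lceil \frac{(x-A[1])k}{A[n]-A[1]}\right\rceil$ and searches for $x$ in the ${\cal SD}$ of bin $i$. The gap ratio is $\Delta=\frac{G_{\max}}{G_{\min}}$, where $G_{\max}$ and $G_{\min}$ are the maximum and minimum distance $A[i+1]-A[i]$ between consecutive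 elements of $A$ (so $G_{\min}>0$). *)

From mathcomp Require Import all_boot all_order all_algebra.
Set Implicit Arguments. Unset Strict Implicit. Unset Printing Implicit Defensive.
Import Order.TTheory GRing.Theory Num.Theory.
Local Open Scope ring_scope.

Definition Afirst (A : seq int) : int := head 0 A.
Definition Alast (A : seq int) : int := last 0 A.

(* ceiling of p / q for q > 0 (integer arithmetic, floor division) *)
Definition ceil_div (p q : int) : int := ((p + q - 1) %/ q)%Z.

(* bin index  i = ceil((x - A[1]) k / (A[n] - A[1]))  of x in [A[1], A[n]];
   the element A[1] itself (for which the formula gives 0) is put in bin 1. *)
Definition bin_index (A : seq int) (k : nat) (x : int) : nat :=
  if x == Afirst A then 1%N
  else `|ceil_div ((x - Afirst A) * k%:Z) (Alast A - Afirst A)|%N.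

Definition bin (A : seq int) (k j : nat) : seq int :=
  [seq a <- A | bin_index A k a == j].

(* Building D_k: distribute the n elements into the bins (cost n), allocate the
   auxiliary array of k pointers (cost k), build one copy of SD per bin j = 1..k
   (cost bc (bin A k j)). *)
Definition Dk_build_cost {R : numDomainType} (bc : seq int -> R)
    (A : seq int) (k : nat) : R :=
  ((size A + k)%N)%:R + \sum_(1 <= j < k.+1) bc (bin A k j).

(* Searching x in D_k: compute the bin index (unit cost, including the range
   test), then search x in the SD of that bin (cost sc (bin ..) x); elements
   outside [A[1], A[n]] are rejected directly. *)
Definition Dk_search_cost {R : numDomainType} (sc : seq int -> int -> R)
    (A : seq int) (k : nat) (x : int) : R :=
  1 + (if (Afirst A <= x <= Alast A) then sc (bin A k (bin_index A k x)) x else 0).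

Definition gaps (A : seq int) : seq int :=
  [seq nth 0 A i.+1 - nth 0 A i | i <- iota 0 (size A).-1].

Definition Gmax (A : seq int) : int := \big[Num.max/0]_(d <- gaps A) d.
Definition Gmin (A : seq int) : int := \big[Num.min/Gmax A]_(d <- gaps A) d.

Definition gap_ratio (R : numFieldType) (A : seq int) : R :=
  (Gmax A)%:~R / (Gmin A)%:~R.

Definition convex_nat {R : numDomainType} (g : nat -> R) : Prop :=
  forall c : nat, 2 * g c.+1 <= g c + g c.+2.

(* Consecutive elements of A are at least Gmin apart, so a bin holding m
   elements spans at least (m - 1) Gmin, while two elements with the same bin
   index are at most (A[n] - A[1]) / k <= (n - 1) Gmax / k apart.  Hence
   m - 1 < n Delta / k, which bounds the cost of searching in any bin.  For the
   construction, the bins partition A and g is non-decreasing, so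
   sum_j c_j g(c_j) <= n g(n), and the overhead n + k is O(n g(n)) because
   k = O(n) and g(n) >= g(1) > 0. *)

From mathcomp Require Import all_boot all_order all_algebra.
From mathcomp Require Import zify ring lra.
Import Order.TTheory GRing.Theory Num.Theory.
Local Open Scope ring_scope.

Lemma mem_gaps {A : seq int} {i} :
  (i.+1 < size A)%N -> nth 0 A i.+1 - nth 0 A i \in gaps A.
Proof. by move=> lt_iA; apply: map_f; rewrite mem_iota add0n; case: (size A) lt_iA. Qed.

Lemma le_Gmax {A : seq int} {d} : d \in gaps A -> d <= Gmax A.
Proof. by move=> gd; exact: (le_bigmax_seq 0 d xpredT id gd). Qed.

Lemma Gmin_le {A : seq int} {d} : d \in gaps A -> Gmin A <= d.
Proof. by move=> gd; exact: (ge_bigmin_seq (Gmax A) d xpredT id gd). Qed.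

Lemma sorted_Gmin_le_gap (A : seq int) : sorted (fun a b => Gmin A <= b - a) A.
Proof. by apply/(sortedP 0) => i lt_iA; apply/Gmin_le/mem_gaps. Qed.

Lemma sorted_gap_le_Gmax (A : seq int) : sorted (fun a b => b - a <= Gmax A) A.
Proof. by apply/(sortedP 0) => i lt_iA; apply/le_Gmax/mem_gaps. Qed.

Lemma Gmin_gt0 {A : seq int} : sorted <%R A -> (2 <= size A)%N -> 0 < Gmin A.
Proof.
move=> /(sortedP 0) ltA A2.
have Gmax_gt0 : 0 < Gmax A.
  by apply: lt_le_trans (le_Gmax (mem_gaps A2)); rewrite subr_gt0 ltA.
rewrite /Gmin big_seq; apply: (big_ind (fun d => 0 < d)) => //.
- by move=> d e d0 e0; rewrite lt_min d0 e0.
by move=> d /mapP[i]; rewrite mem_iota add0n ltn_predRL => /andP[_ /ltA]; rewrite -subr_gt0 => + ->.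
Qed.

Lemma last_path_ge {R : realDomainType} {G x : R} {s} :
  path (fun a b => G <= b - a) x s -> x + (size s)%:R * G <= last x s.
Proof.
elim: s x => [|y s IH] x /=; first by rewrite mul0r addr0.
by case/andP=> le_Gxy /IH; rewrite -addn1 natrD mulrDl mul1r; lra.
Qed.

Lemma last_path_le {R : realDomainType} {G x : R} {s} :
  path (fun a b => b - a <= G) x s -> last x s <= x + (size s)%:R * G.
Proof.
elim: s x => [|y s IH] x /=; first by rewrite mul0r addr0.
by case/andP=> le_xyG /IH; rewrite -addn1 natrD mulrDl mul1r; lra.
Qed.

Lemma span_bounds (A : seq int) :
  (size A).-1%:R * Gmin A <= Alast A - Afirst A <= (size A).-1%:R * Gmax A.
Proof.
rewrite /Alast /Afirst; case: A (sorted_Gmin_le_gap A) (sorted_gap_le_Gmax A).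
  by rewrite /= !mul0r subrr lexx.
by move=> a A /= /last_path_ge ge_Gmin /last_path_le le_Gmax; apply/andP; split; lra.
Qed.

Lemma ceil_div_ge0 (p q : int) : 0 <= p -> 0 < q -> 0 <= ceil_div p q.
Proof. by move=> p0 q0; rewrite divz_ge0 //; lia. Qed.

Lemma ceil_divP (p q : int) : 0 < q -> (ceil_div p q - 1) * q < p <= ceil_div p q * q.
Proof.
move=> q0; have := lez_floor (p + q - 1) (lt0r_neq0 q0).
have := ltz_ceil (p + q - 1) q0; rewrite -/(ceil_div p q).
by rewrite mulrDl mulrBl mul1r; lia.
Qed.

Lemma bin_index_bounds (A : seq int) k x :
  0 < Alast A - Afirst A -> Afirst A <= x ->
  ((bin_index A k x)%:Z - 1) * (Alast A - Afirst A) <= (x - Afirst A) * k%:Z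
    <= (bin_index A k x)%:Z * (Alast A - Afirst A).
Proof.
set L := Alast A - Afirst A => L0 le_A1x; rewrite /bin_index -/L.
case: eqP => [->|ne_xA1]; first by rewrite subrr mul0r; lia.
have kx0 : 0 <= (x - Afirst A) * k%:Z by apply: mulr_ge0; rewrite ?subr_ge0.
rewrite gez0_abs ?ceil_div_ge0 //.
by have /andP[/ltW -> ->] := ceil_divP ((x - Afirst A) * k%:Z) L L0.
Qed.

Lemma same_bin_dist {A : seq int} {k a b} :
  0 < Alast A - Afirst A -> Afirst A <= a -> a <= b ->
  bin_index A k a = bin_index A k b -> (b - a) * k%:Z <= Alast A - Afirst A.
Proof.
move=> L0 le_A1a le_ab eq_ab.
have /andP[lo_a _] := bin_index_bounds A k a L0 le_A1a.
have /andP[_ hi_b] := bin_index_bounds A k b L0 (le_trans le_A1a le_ab).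
by move: lo_a hi_b; rewrite eq_ab; nia.
Qed.

Lemma Afirst_le {A : seq int} {a} : sorted <%R A -> a \in A -> Afirst A <= a.
Proof.
case: A => [|y A] //= /(order_path_min lt_trans) /allP lt_yA.
by rewrite inE => /predU1P[-> //|/lt_yA/ltW].
Qed.

Lemma span_gt0 {A : seq int} :
  sorted <%R A -> (2 <= size A)%N -> 0 < Alast A - Afirst A.
Proof.
move=> ltA A2; have /andP[+ _] := span_bounds A; apply: lt_le_trans.
by rewrite pmulr_rgt0 ?Gmin_gt0 // ltr0n -ltnS prednK // ltnW.
Qed.

Lemma sorted_bin {A : seq int} {k j} : sorted <%R A -> sorted <%R (bin A k j).
Proof. exact/sorted_filter/lt_trans. Qed.

Lemma size_bin_le (A : seq int) k j : (size (bin A k j) <= size A)%N.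
Proof. by rewrite size_filter count_size. Qed.

Lemma size_bin_span (A : seq int) k j : sorted <%R A -> (2 <= size A)%N ->
  (size (bin A k j)).-1%:R * Gmin A * k%:Z <= Alast A - Afirst A.
Proof.
move=> ltA A2; have L0 := span_gt0 ltA A2; have Gmin0 := Gmin_gt0 ltA A2.
have gap_bin : sorted (fun a b => Gmin A <= b - a) (bin A k j).
  by apply: sorted_filter (sorted_Gmin_le_gap A) => b a c; lia.
have mem_bin a : a \in bin A k j -> a \in A /\ bin_index A k a = j.
  by rewrite mem_filter => /andP[/eqP].
case: (bin A k j) gap_bin mem_bin => [|x s] /= gap_s mem_s.
  by rewrite !mul0r ltW.
have [xA bin_x] := mem_s x (mem_head x s).
have [_ bin_last] := mem_s (last x s) (mem_last x s).
have span_s : (size s)%:R * Gmin A <= last x s - x.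
  by rewrite lerBrDl; exact: last_path_ge gap_s.
have le_x_last : x <= last x s.
  by rewrite -subr_ge0; apply: le_trans span_s; rewrite mulr_ge0 // ltW.
have := same_bin_dist L0 (Afirst_le ltA xA) le_x_last (etrans bin_x (esym bin_last)).
exact/le_trans/ler_wpM2r.
Qed.

Lemma size_bin_le_ceil (R : archiRealFieldType) (A : seq int) k j :
  sorted <%R A -> (2 <= size A)%N -> (0 < k)%N ->
  (size (bin A k j) <= `|Num.ceil ((size A)%:R * gap_ratio R A / k%:R)|)%N.
Proof.
move=> ltA A2 k0; have Gmin0 := Gmin_gt0 ltA A2.
have Gmax0 : 0 < Gmax A.
  exact: lt_le_trans Gmin0 (le_trans (Gmin_le (mem_gaps A2)) (le_Gmax (mem_gaps A2))).
have /andP[_ span_le] := span_bounds A.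
have := size_bin_span A k j ltA A2.
case: (size (bin A k j)) => [//|m] /= span_bin.
have lt_int : m%:Z * Gmin A * k%:Z < (size A)%:Z * Gmax A.
  rewrite -natz; apply: (le_lt_trans span_bin); apply: (le_lt_trans span_le).
  by rewrite ltr_pM2r // -!natz ltr_nat prednK // ltnW.
have lt_real : (m%:R : R) < (size A)%:R * gap_ratio R A / k%:R.
  have Gmin0R : (0 : R) < (Gmin A)%:~R by rewrite ltr0z.
  rewrite /gap_ratio ltr_pdivlMr ?ltr0n // mulrA ltr_pdivlMr //.
  by rewrite -(ltr_int R) !intrM in lt_int; rewrite mulrAC.
have := lt_le_trans lt_real (ceil_ge _); rewrite pmulrn ltr_int.
by set c := Num.ceil _; lia.
Qed.

Lemma sum_count_eq_le (T : Type) (h : T -> nat) (r : seq nat) (s : seq T) :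
  uniq r -> (\sum_(j <- r) count (fun a => h a == j) s <= size s)%N.
Proof.
move=> uniq_r; elim: s => [|a s IH] /=; first by rewrite big1.
rewrite big_split /= -addn1 addnC leq_add //.
rewrite -big_mkcond /= sum1_count.
by under eq_count => j do rewrite eq_sym; rewrite count_uniq_mem ?leq_b1.
Qed.

Section BuildCost.
Context {R : realFieldType} {g : nat -> R}.
Hypotheses (g_nondecr : forall c, g c <= g c.+1) (g1_gt0 : 0 < g 1%N).

Let g_homo : {homo g : m n / (m <= n)%N >-> m <= n}.
Proof. exact: homo_leq lexx le_trans g_nondecr. Qed.

Lemma max1_mul_le m n : (m <= n)%N -> Num.max 1 (m%:R * g m) <= 1 + m%:R * g n.
Proof.
case: m => [|m] le_mn; first by rewrite !mul0r addr0 ge_max lexx ler01.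
have gm0 : 0 <= g m.+1 by rewrite ltW // (lt_le_trans g1_gt0) ?g_homo.
have le_gmn : m.+1%:R * g m.+1 <= m.+1%:R * g n by rewrite ler_wpM2l ?g_homo.
rewrite ge_max lerDl (le_trans _ le_gmn) ?mulr_ge0 //=.
by rewrite (le_trans le_gmn) // lerDr.
Qed.

Context {bc : seq int -> R} {Cb : R}.
Hypothesis bc_le : forall s, sorted <%R s ->
  bc s <= Cb * Num.max 1 ((size s)%:R * g (size s)).

Lemma Dk_build_cost_le {A : seq int} k : sorted <%R A -> (0 < size A)%N ->
  Dk_build_cost bc A k <=
  (1 + `|Cb|) * ((size A)%:R + k%:R) + `|Cb| * ((size A)%:R * g (size A)).
Proof.
move=> ltA A0; set n := size A.
have bc_bin j : bc (bin A k j) <= `|Cb| * (1 + (size (bin A k j))%:R * g n).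
  apply: le_trans (bc_le _ (sorted_bin ltA)) _.
  rewrite (le_trans (ler_wpM2r _ (ler_norm Cb))) ?le_max ?ler01 //.
  by rewrite ler_wpM2l // max1_mul_le ?size_bin_le.
have sum_bins : (\sum_(1 <= j < k.+1) size (bin A k j) <= n)%N.
  under eq_bigr => j _ do rewrite size_filter.
  exact: sum_count_eq_le (iota_uniq _ _).
have gn0 : 0 <= g n by rewrite ltW // (lt_le_trans g1_gt0) ?g_homo.
have sum_g_le : `|Cb| * ((\sum_(1 <= j < k.+1) size (bin A k j))%:R * g n)
                 <= `|Cb| * (n%:R * g n).
  by rewrite ler_wpM2l // ler_wpM2r // ler_nat.
rewrite /Dk_build_cost natrD.
rewrite (le_trans (lerD (lexx _) (ler_sum _ (fun j _ => bc_bin j)))) //.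
rewrite -mulr_sumr big_split /= sumr_const_nat subn1 /= -mulr_suml -natr_sum.
have := mulr_ge0 (normr_ge0 Cb) (ler0n R n).
by rewrite -/n mulrDr; lra.
Qed.

Lemma Dk_build_cost_O {K : nat} {A : seq int} {k} :
  sorted <%R A -> (0 < size A)%N -> (k <= K * size A)%N ->
  Dk_build_cost bc A k <=
  ((1 + `|Cb|) * (1 + K%:R) / g 1%N + `|Cb|) * ((size A)%:R * g (size A)).
Proof.
move=> ltA A0 le_kKn; set n := size A.
apply: le_trans (Dk_build_cost_le k ltA A0) _; rewrite -/n.
have le_n_ng : n%:R <= n%:R * g n / g 1%N.
  by rewrite ler_pdivlMr // ler_wpM2l ?g_homo.
have le_nk : n%:R + k%:R <= (1 + K%:R) * n%:R :> R.
  by rewrite mulrDl mul1r -natrM lerD2l ler_nat.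
rewrite [leRHS]mulrDl lerD2r -!mulrA ler_wpM2l ?addr_ge0 // (le_trans le_nk) //.
by rewrite ler_wpM2l ?addr_ge0 // mulrC.
Qed.
End BuildCost.

Lemma Dk_search_cost_le {R : realDomainType} {sc : seq int -> int -> R}
    {f : nat -> R} {Cs : R} {A : seq int} {k m} x :
  (forall c, f c <= f c.+1) ->
  (forall s y, sorted <%R s -> sc s y <= Cs * Num.max 1 (f (size s))) ->
  sorted <%R A -> (forall j, (size (bin A k j) <= m)%N) ->
  Dk_search_cost sc A k x <= (1 + `|Cs|) * Num.max 1 (f m).
Proof.
move=> f_nondecr sc_le ltA size_bin_m; set M := Num.max 1 (f m).
have M1 : 1 <= M by rewrite le_max lexx.
have max1_f_le j : Num.max 1 (f (size (bin A k j))) <= M.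
  by rewrite ge_max M1 le_max (homo_leq lexx le_trans f_nondecr) ?size_bin_m ?orbT.
have sc_bin j : sc (bin A k j) x <= `|Cs| * M.
  apply: le_trans (sc_le _ x (sorted_bin ltA)) _.
  rewrite (le_trans (ler_wpM2r _ (ler_norm Cs))) ?le_max ?ler01 //.
  by rewrite ler_wpM2l ?max1_f_le.
have := mulr_ge0 (normr_ge0 Cs) (le_trans ler01 M1).
rewrite /Dk_search_cost; case: ifP => _; last by rewrite mulrDl mul1r; lra.
by have := sc_bin (bin_index A k x); rewrite mulrDl mul1r; lra.
Qed.

Theorem theorem1 (R : archiRealFieldType)
  (bc : seq int -> R) (sc : seq int -> int -> R) (g f : nat -> R) (Cb Cs : R)
  (g_convex : convex_nat g)
  (g_nondecr : forall c : nat, g c <= g c.+1)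
  (g_pos : 0 < g 1%N)
  (f_nondecr : forall c : nat, f c <= f c.+1)
  (Hbuild : forall s : seq int, sorted <%R s ->
      bc s <= Cb * Num.max 1 ((size s)%:R * g (size s)))
  (Hsearch : forall (s : seq int) (x : int), sorted <%R s ->
      sc s x <= Cs * Num.max 1 (f (size s)))
  (K : nat) :
  exists C : R, forall (A : seq int) (k : nat),
    sorted <%R A -> (2 <= size A)%N -> (0 < k)%N -> (k <= K * size A)%N ->
    Dk_build_cost bc A k <= C * ((size A)%:R * g (size A)) /\
    (forall x : int,
       Dk_search_cost sc A k x <=
       C * Num.max 1 (f (minn (size A)
              `|Num.ceil ((size A)%:R * gap_ratio R A / k%:R)|%N))).
Proof.
set Cbuild := (1 + `|Cb|) * (1 + K%:R) / g 1%N + `|Cb|.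
set Csearch := 1 + `|Cs|.
have Cbuild0 : 0 <= Cbuild.
  by rewrite addr_ge0 // divr_ge0 ?mulr_ge0 ?addr_ge0 // ltW.
exists (Cbuild + Csearch) => A k ltA A2 k0 le_kKn; split.
- apply: le_trans (Dk_build_cost_O g_nondecr g_pos Hbuild ltA (ltnW A2) le_kKn) _.
  rewrite ler_wpM2r ?lerDl ?addr_ge0 // mulr_ge0 // ltW //.
  exact: lt_le_trans g_pos (homo_leq lexx le_trans g_nondecr (ltnW A2)).
- move=> x; have size_bins j : (size (bin A k j) <= minn (size A)
      `|Num.ceil ((size A)%:R * gap_ratio R A / k%:R)|)%N.
    by rewrite leq_min size_bin_le size_bin_le_ceil.
  apply: le_trans (Dk_search_cost_le x f_nondecr Hsearch ltA size_bins) _.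
  by rewrite ler_wpM2r ?le_max ?ler01 // lerDr.
Qed.
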